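(* Let $(x_k)_{k\ge0}$ be indeterminates, define $a_n=x_n$ if $n=2^k-1$ for some integer $k\ge0$ and $a_n=0$ otherwise, and let $D(n)=\det\left(a_{i+j+1}\right)_{i,j=0}^{n-1}$ with $D(0)=1$. For $k\ge1$ and $n\ge0$ let $\mu_k(n)$ be the degree of $D(n)$ in the variable $x_{2^k-1}$. Then for every $k\ge1$ and $0\le i\le 2^{k-1}-1$: $$\mu_k(i)=0,\quad \mu_k(2^{k-1}+i)=2i+1,\quad \mu_k(2^k+i)=2^k-2i-1,\quad \mu_k(2^k+2^{k-1}+i)=0,$$ and for $n\ge 2^{k+1}$, $\mu_k(n)=\mu_k(n\bmod 2^{k+1})$.
   Context: The paper writes $D(n)=(-1)^{\sum_i\binom{\mu_i(n)}{2}}\prod_{i\ge1}x_{2^i-1}^{\mu_i(n)}$, so $\mu_i(n)$ is the exponent of $x_{2^i-1}$ in $D(n)$. *)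

From HB Require Import structures.
From mathcomp Require Import all_boot all_order all_algebra.
From mathcomp Require Import finmap.
From mathcomp Require Import mpoly.
Set Implicit Arguments. Unset Strict Implicit. Unset Printing Implicit Defensive.
Import GRing.Theory.
Local Open Scope ring_scope.

(* [is_pow2m1 n] : n = 2^k - 1 for some k >= 0 (necessarily k <= n). *)
Definition is_pow2m1 (n : nat) : bool :=
  has (fun k => n == (2 ^ k - 1)%N) (iota 0 n.+1).

(* The variable x_m inside {mpoly int[N]} (variables x_0, ..., x_{N-1});
   the zero polynomial if m >= N (never used in that case below). *)
Definition xvar (N m : nat) : {mpoly int[N]} :=
  match insub m with Some i => 'X_i | None => 0 end.

Definition a_seq (N m : nat) : {mpoly int[N]} :=
  if is_pow2m1 m then xvar N m else 0.

(* D(n) = det (a_{i+j+1})_{i,j=0}^{n-1}; all indices i+j+1 are <= 2n-1,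
   so D(n) lives in the polynomial ring in x_0, ..., x_{2n-1}.  D(0) = 1
   (determinant of the empty matrix). *)
Definition D (n : nat) : {mpoly int[2 * n]} :=
  \det (\matrix_(i < n, j < n) a_seq (2 * n) (i + j + 1)%N).

(* degree of p in the variable x_m (0 if x_m is not among the variables,
   i.e. it does not occur in p); for p = 0 this is 0. *)
Definition degvar (N : nat) (p : {mpoly int[N]}) (m : nat) : nat :=
  match insub m with
  | Some i => \max_(mm <- msupp p) (mm : 'X_{1..N}) i
  | None => 0%N
  end.

Definition mu (k n : nat) : nat := degvar (D n) (2 ^ k - 1).

(* The sequence a vanishes at every even t > 0, and at odd indices a_{2s+1}
   is the same sequence built on the variables y_s = x_{2s+1}.  Sorting the
   rows and columns of a Hankel determinant by parity therefore splits it, up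
   to sign, into Hankel determinants in y.  Writing H_x(t) = hdet x t for the
   Hankel determinant det (a_{i+j+[t odd]}) of size floor(t/2), this gives
     H_x(2n+1) = ± H_y(n) H_y(n+1)   and   H_x(2m) = ± x_0^[m odd] H_y(m)^2,
   so every H_x(t) is a signed monomial.  Its exponent of x_{2^k-1} obeys the
   recursions of the periodic tent function
     tent k t = 2^k - |t mod 2^(k+2) - 2^(k+1)|,
   and D(n) = H_x(2n+1) gives mu_k(n) = tent k (2n+1). *)

From mathcomp Require Import all_boot all_order all_algebra.
From mathcomp Require Import finmap.
From mathcomp Require Import mpoly.
From mathcomp Require Import fingroup perm zify.
Set Implicit Arguments. Unset Strict Implicit. Unset Printing Implicit Defensive.
Import GRing.Theory.

Definition eqsign (R : pzRingType) (u v : R) := exists b : bool, u = ((-1) ^+ b * v)%R.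
Notation "u =± v" := (eqsign u v) (at level 70, no associativity).

Section UpToSign.
Variable R : comPzRingType.
Local Open Scope ring_scope.
Implicit Types u v w : R.

Lemma eq_eqsign u v : u = v -> u =± v.
Proof. by move->; exists false; rewrite mul1r. Qed.

Lemma eqsign_signrM (b : bool) u : u =± (-1) ^+ b * u.
Proof. by exists b; rewrite signrMK. Qed.

Lemma eqsign_trans u v w : u =± v -> v =± w -> u =± w.
Proof.
by move=> [b ->] [c ->]; exists (b (+) c); rewrite mulrA -signr_addb.
Qed.

Lemma eqsignM u1 u2 v1 v2 : u1 =± v1 -> u2 =± v2 -> u1 * u2 =± v1 * v2.
Proof.
move=> [b ->] [c ->]; exists (b (+) c).
by rewrite signr_addb mulrACA.
Qed.

End UpToSign.

Definition parity_sort (b : bool) (p i : nat) : nat :=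
  if i < p then 2 * i + b else 2 * (i - p) + ~~ b.

Lemma parity_sort_inj b p : injective (parity_sort b p).
Proof. by move=> i j; rewrite /parity_sort; case: b; do 2 case: ifP; lia. Qed.

Lemma parity_sort_lt (b : bool) p n i :
  n <= 2 * p + b <= n.+1 -> i < n -> parity_sort b p i < n.
Proof. by rewrite /parity_sort; case: b; case: ifP; lia. Qed.

Lemma even_or_odd n : exists p, n = 2 * p \/ n = (2 * p).+1.
Proof. by exists n./2; have := odd_double_half n; rewrite -muln2; case: (odd n); lia. Qed.

Section Determinants.
Variable R : comPzRingType.
Local Open Scope ring_scope.

Lemma det_reindex n (M : 'M[R]_n) (f g : 'I_n -> 'I_n) :
  injective f -> injective g -> \det M =± \det (\matrix_(i, j) M (f i) (g j)).
Proof.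
move=> f_inj g_inj; pose s := perm f_inj; pose t := perm g_inj.
have -> : \matrix_(i, j) M (f i) (g j) = row_perm s (col_perm t M).
  by apply/matrixP => i j; rewrite !mxE !permE.
rewrite row_permE col_permE !det_mulmx !det_perm mulrCA mulrC -signr_addb.
exact: eqsign_signrM.
Qed.

Lemma det_reindex_lblock n p q (g : nat -> nat -> R) (phi psi : nat -> nat) :
  (p + q = n)%N -> injective phi -> injective psi ->
  (forall i, i < n -> phi i < n)%N -> (forall j, j < n -> psi j < n)%N ->
  (forall i j, (i < p)%N -> (j < q)%N -> g (phi i) (psi (p + j)%N) = 0) ->
  \det (\matrix_(i < n, j < n) g i j) =±
    \det (\matrix_(i < p, j < p) g (phi i) (psi j)) *
    \det (\matrix_(i < q, j < q) g (phi (p + i)%N) (psi (p + j)%N)).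
Proof.
move=> <- phi_inj psi_inj phi_lt psi_lt g0.
pose f i := Ordinal (phi_lt _ (ltn_ord i)); pose f' j := Ordinal (psi_lt _ (ltn_ord j)).
have f_inj : injective f by move=> i j /(congr1 val) /phi_inj /val_inj.
have f'_inj : injective f' by move=> i j /(congr1 val) /psi_inj /val_inj.
apply: eqsign_trans (det_reindex _ f_inj f'_inj) _.
set X := \matrix_(i, j) _; rewrite -[X]submxK.
have -> : ursubmx X = 0 by apply/matrixP => i j; rewrite !mxE /= g0.
rewrite det_lblock; apply: eq_eqsign.
by congr (_ * _); congr (\det _); apply/matrixP => i j; rewrite !mxE.
Qed.

Lemma det_checkerboard_odd n (M : 'M[R]_n) : odd n ->
  (forall i j : 'I_n, ~~ odd (i + j) -> M i j = 0) -> \det M = 0.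
Proof.
(* Every Leibniz term has a factor M i (s i) with i + s i even: the sum of all
   i + s i is even, whereas n odd summands would have an odd sum. *)
move=> odd_n M0; rewrite /(\det M) big1 // => s _.
case: (pickP (fun i : 'I_n => ~~ odd (i + s i))) => [i even_i | all_odd].
  by rewrite (bigD1 i) //= M0 // mul0r mulr0.
suff : odd (\sum_(i < n) (i + s i)) = odd n.
  rewrite big_split /= (reindex_inj (@perm_inj _ s)) /= addnn odd_double.
  by rewrite odd_n.
rewrite -[in RHS](card_ord n) -sum1_card.
elim/big_rec2: _ => // i a b _ IH.
by rewrite [odd (_ + a)]oddD (negbFE (all_odd i)) oddD IH.
Qed.

Lemma det_corner_update m (M N : 'M[R]_m.+1) :
  (forall i j, (i != 0) || (j != 0) -> M i j = N i j) ->
  \det M = \det N + (M 0 0 - N 0 0) * \det (row' 0 (col' 0 M)).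
Proof.
move=> MN.
have cofMN j : cofactor M 0 j = cofactor N 0 j.
  by congr (_ * \det _); apply/matrixP => i k; rewrite !mxE MN // neq_lift.
rewrite (expand_det_row M 0) (expand_det_row N 0) !big_ord_recl.
under eq_bigr => j _ do rewrite cofMN MN ?neq_lift ?orbT //.
rewrite -cofMN /cofactor /= expr0 mul1r mulrBl.
by rewrite [RHS]addrAC [_ + (_ - _)]addrC subrK.
Qed.

Definition hankel n (g : nat -> R) : 'M[R]_n := \matrix_(i < n, j < n) g (i + j)%N.

Lemma eq_hankel n (g1 g2 : nat -> R) : g1 =1 g2 -> hankel n g1 = hankel n g2.
Proof. by move=> eq_g; apply/matrixP => i j; rewrite !mxE eq_g. Qed.

Lemma det_hankel_corner m (g g' : nat -> R) : (forall t, 0 < t -> g' t = g t)%N ->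
  \det (hankel m.+1 g) =
    \det (hankel m.+1 g') + (g 0%N - g' 0%N) * \det (hankel m (fun t => g t.+2)).
Proof.
move=> gg'; rewrite (@det_corner_update _ _ (hankel m.+1 g')) => [|i j ij0].
  rewrite !mxE; congr (_ + _ * \det _).
  by apply/matrixP => i j; rewrite !mxE !lift0 /= addnS addSn.
by rewrite !mxE gg' //; move: ij0; case: i j => [[|i] ?] [[|j] ?].
Qed.

Lemma det_hankel_odd_size n (g : nat -> R) : odd n ->
  (forall t, ~~ odd t -> g t = 0) -> \det (hankel n g) = 0.
Proof. by move=> odd_n g0; apply: det_checkerboard_odd => // i j /g0; rewrite mxE. Qed.

Lemma det_hankel_even_support n (g : nat -> R) : (forall t, odd t -> g t = 0) ->
  \det (hankel n g) =±
    \det (hankel (uphalf n) (fun t => g (2 * t)%N)) *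
    \det (hankel n./2 (fun t => g (2 * t).+2)).
Proof.
move=> g0.
have [n_sum n_bound] : (uphalf n + n./2 = n /\ n <= 2 * uphalf n <= n.+1)%N.
  by have := odd_double_half n; rewrite uphalf_half -muln2; case: (odd n); lia.
apply: eqsign_trans (det_reindex_lblock (g := fun i j => g (i + j)%N) n_sum
   (@parity_sort_inj false (uphalf n)) (@parity_sort_inj false (uphalf n)) _ _ _) _.
- by move=> i; apply: parity_sort_lt; rewrite addn0.
- by move=> j; apply: parity_sort_lt; rewrite addn0.
- move=> i j lt_i _; rewrite /parity_sort lt_i ifF; last by lia.
  by apply: g0; rewrite addKn !mul2n !oddD !odd_double.
apply: eq_eqsign; congr (_ * _); congr (\det _); apply/matrixP => i j; rewrite !mxE.
  by rewrite /parity_sort !ltn_ord mulnDr !addn0.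
by rewrite /parity_sort !ifF ?ltnNge ?leq_addr //; congr g; lia.
Qed.

Lemma det_hankel_odd_support p (g : nat -> R) : (forall t, ~~ odd t -> g t = 0) ->
  \det (hankel (2 * p) g) =± \det (hankel p (fun t => g (2 * t).+1)) ^+ 2.
Proof.
move=> g0; have p_sum : (p + p = 2 * p)%N by lia.
apply: eqsign_trans (det_reindex_lblock (g := fun i j => g (i + j)%N) p_sum
   (@parity_sort_inj false p) (@parity_sort_inj true p) _ _ _) _.
- by move=> i; apply: parity_sort_lt; lia.
- by move=> j; apply: parity_sort_lt; lia.
- move=> i j lt_i _; rewrite /parity_sort lt_i ifF; last by lia.
  by apply: g0; rewrite addKn !mul2n !oddD !odd_double.
rewrite expr2; apply: eq_eqsign; congr (_ * _); congr (\det _); apply/matrixP => i j;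
  rewrite !mxE /parity_sort.
  by rewrite !ltn_ord /= addn0 addn1 addnS mulnDr.
by rewrite !ifF ?ltnNge ?leq_addr //; congr g; lia.
Qed.

End Determinants.

Lemma is_pow2m1P n : reflect (exists k, n = 2 ^ k - 1) (is_pow2m1 n).
Proof.
apply: (iffP hasP) => [[k _ /eqP ->]|[k ->]]; first by exists k.
by exists k => //; rewrite mem_iota add0n ltnS; have := ltn_expl k (ltnSn 1); lia.
Qed.

Lemma is_pow2m1_double_add1 s : is_pow2m1 (2 * s).+1 = is_pow2m1 s.
Proof.
apply/is_pow2m1P/is_pow2m1P => [[[|k]]|[k ->]]; first by rewrite expn0; lia.
  by rewrite expnS => eq_s; exists k; have := expn_gt0 2 k; lia.
by exists k.+1; rewrite expnS; have := expn_gt0 2 k; lia.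
Qed.

Lemma is_pow2m1_even t : ~~ odd t -> 0 < t -> is_pow2m1 t = false.
Proof.
move=> even_t t_gt0; apply/is_pow2m1P => -[[|k] eq_t]; first by rewrite eq_t in t_gt0.
have := odd_double_half t; rewrite (negbTE even_t) -muln2 eq_t expnS.
have := expn_gt0 2 k; lia.
Qed.

Lemma pow2m1_inj : injective (fun k => 2 ^ k - 1).
Proof.
move=> k K eq_kK; apply: (expnI (ltnSn 1)).
by have := expn_gt0 2 k; have := expn_gt0 2 K; lia.
Qed.

Section Pow2m1Hankel.
Variable R : comPzRingType.
Local Open Scope ring_scope.
Implicit Types x : nat -> R.

Definition pow2m1_seq x t : R := if is_pow2m1 t then x t else 0.

Definition odd_subseq x s : R := x (2 * s).+1.

Lemma pow2m1_seq_odd x s : pow2m1_seq x (2 * s).+1 = pow2m1_seq (odd_subseq x) s.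
Proof. by rewrite /pow2m1_seq is_pow2m1_double_add1. Qed.

Lemma pow2m1_seq_oddS x s :
  pow2m1_seq x (2 * s).+3 = pow2m1_seq (odd_subseq x) s.+1.
Proof. by rewrite -pow2m1_seq_odd mulnS. Qed.

Lemma pow2m1_seq_even x t : ~~ odd t -> (0 < t)%N -> pow2m1_seq x t = 0.
Proof. by move=> even_t t_gt0; rewrite /pow2m1_seq is_pow2m1_even. Qed.

Definition hdet x t : R :=
  if odd t then \det (hankel t./2 (fun s => pow2m1_seq x s.+1))
  else \det (hankel t./2 (pow2m1_seq x)).

Lemma hdet_small x t : (t <= 1)%N -> hdet x t = 1.
Proof. by case: t => [|[|]] //= _; rewrite /hdet /= det_mx00. Qed.

Lemma hdet_odd x n :
  hdet x (2 * n).+1 =± hdet (odd_subseq x) n * hdet (odd_subseq x) n.+1.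
Proof.
rewrite /hdet /= oddM mul2n uphalf_double.
apply: eqsign_trans (det_hankel_even_support _ _) _ => [t odd_t|].
  by apply: pow2m1_seq_even; rewrite /= ?odd_t.
rewrite (eq_hankel _ (pow2m1_seq_odd x)).
rewrite (eq_hankel _ (pow2m1_seq_oddS x)).
case: (boolP (odd n)) => [_|even_n]; first by rewrite mulrC; apply: eq_eqsign.
by rewrite uphalf_half (negbTE even_n); apply: eq_eqsign.
Qed.

Lemma hdet_even x m :
  hdet x (2 * m) =± x 0%N ^+ odd m * hdet (odd_subseq x) m ^+ 2.
Proof.
(* a_0 = x_0 is the only nonzero a_t with t even: clearing it leaves a Hankel
   matrix supported on odd t, and its cofactor is the Hankel matrix of a_{t+2}. *)
pose y t := if t is 0 then 0 else pow2m1_seq x t.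
have y_even t : ~~ odd t -> y t = 0 by case: t => // t even_t; apply: pow2m1_seq_even.
have x_corner k : \det (hankel k.+1 (pow2m1_seq x)) =
    \det (hankel k.+1 y) + x 0%N * \det (hankel k (fun t => pow2m1_seq x t.+2)).
  by rewrite (@det_hankel_corner _ k _ y) ?subr0 //; case.
have x_shift_even t : ~~ odd t -> pow2m1_seq x t.+2 = 0.
  by move=> even_t; apply: pow2m1_seq_even; rewrite /= ?negbK.
rewrite {1}/hdet oddM mul2n doubleK /=.
have [p [-> | ->]] := even_or_odd m.
- case: p => [|p]; first by rewrite /hdet /= !det_mx00 expr1n mulr1; apply: eq_eqsign.
  have -> : (2 * p.+1 = (2 * p).+2)%N by rewrite mulnS.
  rewrite x_corner (@det_hankel_odd_size _ _ _ _ x_shift_even) ?mulr0 ?addr0; last first.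
    by rewrite /= oddM.
  rewrite /hdet /= oddM /= mul2n doubleK expr0 mul1r -doubleS -mul2n.
  apply: eqsign_trans (det_hankel_odd_support _ y_even) _.
  by apply: eq_eqsign; congr (\det _ ^+ 2); apply: eq_hankel => t; apply: pow2m1_seq_odd.
rewrite x_corner (det_hankel_odd_size _ y_even) ?add0r; last by rewrite /= oddM.
rewrite /hdet /= oddM /= mul2n uphalf_double expr1 -mul2n.
apply: eqsignM; first exact: eq_eqsign.
apply: eqsign_trans (det_hankel_odd_support _ x_shift_even) _.
by apply: eq_eqsign; congr (\det _ ^+ 2); apply: eq_hankel => t; apply: pow2m1_seq_oddS.
Qed.

End Pow2m1Hankel.

Definition tent (k t : nat) : nat := 2 ^ k - `|t %% 2 ^ k.+2 - 2 ^ k.+1|.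

Lemma modn_double_add1 m d : (2 * m).+1 %% (2 * d) = (2 * (m %% d)).+1.
Proof.
case: (posnP d) => [->|d_gt0]; first by rewrite !modn0.
rewrite -addn1 -modnDml -muln_modr addn1 modn_small //.
by have := ltn_pmod m d_gt0; lia.
Qed.

Lemma tent_double k m : tent k.+1 (2 * m) = 2 * tent k m.
Proof. by rewrite /tent [2 ^ k.+3]expnS -muln_modr !expnS; lia. Qed.

Lemma tent_double_add1 k n : tent k.+1 (2 * n).+1 = tent k n + tent k n.+1.
Proof.
rewrite /tent [2 ^ k.+3]expnS modn_double_add1 -[n.+1]addn1 -modnDml addn1.
have := ltn_pmod n (expn_gt0 2 k.+2); have := expn_gt0 2 k; rewrite !expnS.
set r := n %% _ => a_gt0 lt_r.
have [lt_r1|eq_r1] : r.+1 < 2 * (2 * 2 ^ k) \/ r.+1 = 2 * (2 * 2 ^ k) by lia.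
  by rewrite modn_small //; lia.
by rewrite eq_r1 modnn; lia.
Qed.

Lemma tent0_double m : tent 0 (2 * m) = odd m.
Proof. by rewrite /tent (_ : 2 ^ 2 = 2 * 2) // -muln_modr modn2; case: (odd m). Qed.

Lemma tent0_double_add1 n : tent 0 (2 * n).+1 = 0.
Proof. by rewrite /tent (_ : 2 ^ 2 = 2 * 2) // modn_double_add1 modn2; case: (odd n). Qed.

Lemma tent_gt0 k t : 0 < tent k t -> 2 ^ k < t.
Proof. by have := leq_mod t (2 ^ k.+2); rewrite /tent !expnS; lia. Qed.

Lemma tent_mod k t : tent k (t %% 2 ^ k.+2) = tent k t.
Proof. by rewrite /tent modn_mod. Qed.

Section Monomials.
Variable R : comPzRingType.
Local Open Scope ring_scope.
Implicit Types x : nat -> R.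

Definition pow2m1_monomial x B (c : nat -> nat) : R :=
  \prod_(k < B) x (2 ^ k - 1)%N ^+ c k.

Lemma pow2m1_monomial_recl x B c :
  pow2m1_monomial x B.+1 c =
    x 0%N ^+ c 0%N * pow2m1_monomial (odd_subseq x) B (fun k => c k.+1).
Proof.
rewrite /pow2m1_monomial big_ord_recl /= subnn; congr (_ * _).
apply: eq_bigr => k _; rewrite /odd_subseq /bump /= expnS.
have := expn_gt0 2 k; rewrite add1n => ?; congr (x _ ^+ _); lia.
Qed.

Lemma pow2m1_monomialD x B c1 c2 :
  pow2m1_monomial x B c1 * pow2m1_monomial x B c2 =
    pow2m1_monomial x B (fun k => c1 k + c2 k)%N.
Proof. by rewrite -big_split; apply: eq_bigr => k _; rewrite exprD. Qed.

Lemma eq_pow2m1_monomial x B c1 c2 :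
  c1 =1 c2 -> pow2m1_monomial x B c1 = pow2m1_monomial x B c2.
Proof. by move=> eq_c; apply: eq_bigr => k _; rewrite eq_c. Qed.

Lemma hdet_eqsign_monomial B x t :
  (t <= 2 ^ B)%N -> hdet x t =± pow2m1_monomial x B (tent^~ t).
Proof.
elim: B x t => [|B IH] x t le_t.
  by rewrite hdet_small // /pow2m1_monomial big_ord0; apply: eq_eqsign.
rewrite expnS in le_t.
have IHx s : (2 * s <= 2 * 2 ^ B)%N ->
    hdet (odd_subseq x) s =± pow2m1_monomial (odd_subseq x) B (tent^~ s).
  by move=> le_s; apply: IH; lia.
have [p [tE | tE]] := even_or_odd t; rewrite tE.
  apply: eqsign_trans (hdet_even x p) _.
  have /IHx IHp : (2 * p <= 2 * 2 ^ B)%N by lia.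
  rewrite expr2; apply: eqsign_trans (eqsignM (eq_eqsign erefl) (eqsignM IHp IHp)) _.
  rewrite pow2m1_monomialD pow2m1_monomial_recl tent0_double.
  apply: eq_eqsign; congr (_ * _).
  by apply: eq_pow2m1_monomial => k; rewrite tent_double; lia.
apply: eqsign_trans (hdet_odd x p) _.
apply: eqsign_trans (eqsignM (IHx p _) (IHx p.+1 _)) _; [lia | lia |].
rewrite pow2m1_monomialD pow2m1_monomial_recl tent0_double_add1 expr0 mul1r.
by apply: eq_eqsign; apply: eq_pow2m1_monomial => k; rewrite tent_double_add1.
Qed.

End Monomials.

Lemma D_eqsign_monomial n :
  D n =± pow2m1_monomial (xvar (2 * n)) n.+1 (tent^~ (2 * n).+1).
Proof.
have -> : D n = hdet (xvar (2 * n)) (2 * n).+1.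
  rewrite /D /hdet /= oddM mul2n uphalf_double; congr determinant.
  by apply/matrixP => i j; rewrite !mxE addn1.
by apply: hdet_eqsign_monomial; rewrite expnS; have := ltn_expl n (ltnSn 1); lia.
Qed.

Section ReadingDegrees.
Variable N : nat.
Local Open Scope ring_scope.

Definition pow2m1_mnm (c : nat -> nat) k : 'X_{1..N} :=
  if insub (2 ^ k - 1)%N is Some j then (U_(j) *+ c k)%MM else 0%MM.

Lemma pow2m1_monomial_xvar B c : (forall k, N <= 2 ^ k - 1 -> c k = 0)%N ->
  pow2m1_monomial (xvar N) B c = 'X_[\big[+%MM/0%MM]_(k < B) pow2m1_mnm c k].
Proof.
move=> c0; rewrite (big_morph _ (@mpolyXD _ _) (@mpolyX0 _ _)).
apply: eq_bigr => k _; rewrite /xvar /pow2m1_mnm.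
case: insubP => [j _ _|]; first by rewrite mpolyXn.
by rewrite -leqNgt => /c0 ->; rewrite expr0 mpolyX0.
Qed.

Lemma pow2m1_mnm_sum B c K (i : 'I_N) : val i = (2 ^ K - 1)%N -> (K < B)%N ->
  (\big[+%MM/0%MM]_(k < B) pow2m1_mnm c k) i = c K.
Proof.
move=> iK lt_KB; rewrite mnm_sumE (bigD1 (Ordinal lt_KB)) //= big1 ?addn0.
  rewrite /pow2m1_mnm; case: insubP => [j _ jK|]; last by rewrite -iK ltn_ord.
  by rewrite mulmnE mnm1E (_ : j == i) ?mul1n //; apply/eqP/val_inj; rewrite jK iK.
move=> k ne_kK; rewrite /pow2m1_mnm; case: insubP => [j _ jk|]; last by rewrite mnm0E.
rewrite mulmnE mnm1E (_ : j == i = false) ?mul0n //; apply/negbTE/eqP => eq_ji.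
by move/eqP: ne_kK; apply; apply/val_inj/pow2m1_inj; rewrite /= -jk -iK eq_ji.
Qed.

Lemma degvar_signed_mpolyX (b : bool) (m : 'X_{1..N}) (i : 'I_N) :
  degvar ((-1) ^+ b * 'X_[m]) i = m i.
Proof.
rewrite /degvar; case: insubP => [j _ /val_inj -> | ]; last by rewrite ltn_ord.
case: b; rewrite ?mulN1r ?mul1r; last by rewrite msuppX big_seq1.
by rewrite (perm_big _ (msuppN _)) msuppX big_seq1.
Qed.

End ReadingDegrees.

Lemma mu_tent K n : mu K n = tent K (2 * n).+1.
Proof.
rewrite /mu; have [b ->] := D_eqsign_monomial n.
rewrite pow2m1_monomial_xvar => [|k le_n]; last first.
  by apply/eqP; rewrite eqn0Ngt; apply/negP => /tent_gt0; lia.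
case: (ltnP (2 ^ K - 1) (2 * n)) => [lt_K | le_K]; last first.
  rewrite /degvar insubN -?leqNgt //.
  by apply/esym/eqP; rewrite eqn0Ngt; apply/negP => /tent_gt0; lia.
rewrite (_ : (2 ^ K - 1)%N = Ordinal lt_K) // degvar_signed_mpolyX.
apply: pow2m1_mnm_sum => //; rewrite -(ltn_exp2l _ _ (ltnSn 1)) expnS.
by have := ltn_expl n (ltnSn 1); lia.
Qed.

Theorem theorem5p5 (k : nat) : (1 <= k)%N ->
  (forall i : nat, (i <= 2 ^ k.-1 - 1)%N ->
     [/\ mu k i = 0%N,
         mu k (2 ^ k.-1 + i) = (2 * i + 1)%N,
         mu k (2 ^ k + i) = (2 ^ k - 2 * i - 1)%N &
         mu k (2 ^ k + 2 ^ k.-1 + i) = 0%N]) /\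
  (forall n : nat, (2 ^ k.+1 <= n)%N -> mu k n = mu k (n %% 2 ^ k.+1)).
Proof.
case: k => // k _ /=; split=> [i le_i | n _].
  by rewrite !mu_tent /tent !expnS; split; rewrite modn_small; lia.
by rewrite !mu_tent -[LHS]tent_mod [2 ^ k.+3]expnS modn_double_add1.
Qed.
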